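(* Let $X,Y$ be real Hilbert spaces, let $K\subset X$ be a nonempty closed convex cone, and let $j:Y\times K\to\mathbb{R}$ be such that for every $\eta\in Y$ the function $j(\eta,\cdot):K\to\mathbb{R}$ is convex, positively homogeneous and Lipschitz continuous. Let $I$ be either $[0,T]$ ($T>0$) or $[0,+\infty)$, let $f:I\to X$, $\eta\in Y$, $u,z\in X$ and $t\in I$. Then $$u\in K\ \text{ and }\ j(\eta,v)-j(\eta,u)\ge (f(t)-z,v-u)_X\ \ \forall v\in K \quad\Longleftrightarrow\quad -u\in \mathrm{N}_{C(\eta,t)}(z).$$
   Context: Define $J:Y\times X\to(-\infty,+\infty]$ by $J(\eta,v)=j(\eta,v)$ if $v\in K$ and $J(\eta,v)=+\infty$ otherwise; $C(\eta)=\{\xi\in X: J(\eta,v)\ge(\xi,v)_X\ \forall v\in X\}$ and $C(\eta,t)=f(t)-C(\eta)$. For a nonempty closed convex set $D\subset X$, $\mathrm{N}_D(x)=\{\xi\in X:(\xi,w-x)_X\le 0\ \forall w\in D\}$ if $x\in D$, and $\mathrm{N}_D(x)=\emptyset$ if $x\notin D$. *)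

From HB Require Import structures.
From mathcomp Require Import all_boot all_order all_algebra.
From mathcomp Require Import all_classical all_reals all_analysis.
Set Implicit Arguments. Unset Strict Implicit. Unset Printing Implicit Defensive.
Import Order.TTheory GRing.Theory Num.Theory.
Import numFieldNormedType.Exports.
Local Open Scope classical_set_scope.
Local Open Scope ring_scope.

(* A real Hilbert space: a complete normed space over R whose norm is induced
   by the inner product [ip] (symmetric, linear in the first argument). *)
Definition is_inner_product (R : realType) (X : completeNormedModType R)
  (ip : X -> X -> R) : Prop :=
  [/\ (forall x y, ip x y = ip y x),
      (forall (a : R) (x y z : X), ip (a *: x + y) z = a * ip x z + ip y z) &
      (forall x, ip x x = `|x| ^+ 2)].

Definition h_convex_set (R : realType) (X : completeNormedModType R) (D : set X) : Prop :=
  forall x y (l : R), D x -> D y -> 0 <= l <= 1 -> D (l *: x + (1 - l) *: y).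

Definition h_is_cone (R : realType) (X : completeNormedModType R) (K : set X) : Prop :=
  forall x (l : R), K x -> 0 <= l -> K (l *: x).

Definition h_convex_fun_on (R : realType) (X : completeNormedModType R)
  (D : set X) (g : X -> R) : Prop :=
  forall x y (l : R), D x -> D y -> 0 <= l <= 1 ->
    g (l *: x + (1 - l) *: y) <= l * g x + (1 - l) * g y.

Definition h_pos_homogeneous_on (R : realType) (X : completeNormedModType R)
  (D : set X) (g : X -> R) : Prop :=
  forall x (l : R), D x -> 0 < l -> g (l *: x) = l * g x.

Definition h_lipschitz_on (R : realType) (X : completeNormedModType R)
  (D : set X) (g : X -> R) : Prop :=
  exists L : R, forall x y, D x -> D y -> `|g x - g y| <= L * `|x - y|.

Definition Jext (R : realType) (X Y : completeNormedModType R) (K : set X)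
  (j : Y -> X -> R) (eta : Y) (v : X) : \bar R :=
  if `[< K v >] then (j eta v)%:E else +oo%E.

Definition Cset (R : realType) (X Y : completeNormedModType R) (ip : X -> X -> R)
  (K : set X) (j : Y -> X -> R) (eta : Y) : set X :=
  [set xi | forall v : X, ((ip xi v)%:E <= Jext K j eta v)%E].

Definition Cset_t (R : realType) (X Y : completeNormedModType R) (ip : X -> X -> R)
  (K : set X) (j : Y -> X -> R) (f : R -> X) (eta : Y) (t : R) : set X :=
  [set f t - xi | xi in Cset ip K j eta].

Definition h_normal_cone (R : realType) (X : completeNormedModType R)
  (ip : X -> X -> R) (D : set X) (x : X) : set X :=
  if `[< D x >] then [set xi | forall w, D w -> ip xi (w - x) <= 0] else set0.

From HB Require Import structures.
From mathcomp Require Import all_boot all_order all_algebra.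
From mathcomp Require Import all_classical all_reals all_analysis.
From mathcomp Require Import ring lra.
Import Order.TTheory GRing.Theory Num.Theory.
Import numFieldNormedType.Exports.
Local Open Scope classical_set_scope.
Local Open Scope ring_scope.
Set Implicit Arguments.
Unset Strict Implicit.

(* With w := f t - z, the right-hand side says that u lies in the normal cone
   of C(eta) at w.  By positive homogeneity, the variational inequality at u
   with datum w amounts to j(eta,u) = (w,u) together with w \in C(eta), which
   gives the forward implication.  Conversely, let p solve the variational
   inequality with datum w + u: p minimizes j(eta,v) + |v - w - u|^2/2 over K,
   a minimizer existing by completeness and strong convexity.  Then
   w + u - p \in C(eta) and j(eta,p) = (w + u - p, p); testing the normal cone
   condition at w + u - p and the constraint w \in C(eta) at p yields
   |u - p|^2 <= 0, so u = p solves the inequality with datum w. *)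

Section InnerProduct.
Variables (R : realType) (X : completeNormedModType R) (ip : X -> X -> R).
Hypothesis ipX : is_inner_product ip.

Lemma ipC x y : ip x y = ip y x.
Proof. by case: ipX. Qed.

Lemma ipDl x y z : ip (x + y) z = ip x z + ip y z.
Proof. by case: ipX => _ lin _; have := lin 1 x y z; rewrite scale1r mul1r. Qed.

Lemma ip0l z : ip 0 z = 0.
Proof. by have := ipDl 0 0 z; rewrite addr0; lra. Qed.

Lemma ipZl a x z : ip (a *: x) z = a * ip x z.
Proof. by case: ipX => _ lin _; have := lin a x 0 z; rewrite !addr0 ip0l addr0. Qed.

Lemma ipNl x z : ip (- x) z = - ip x z.
Proof. by rewrite -scaleN1r ipZl mulN1r. Qed.

Lemma ipBl x y z : ip (x - y) z = ip x z - ip y z.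
Proof. by rewrite ipDl ipNl. Qed.

Lemma ipDr x y z : ip z (x + y) = ip z x + ip z y.
Proof. by rewrite !(ipC z) ipDl. Qed.

Lemma ipZr a x z : ip z (a *: x) = a * ip z x.
Proof. by rewrite !(ipC z) ipZl. Qed.

Lemma ipNr x z : ip z (- x) = - ip z x.
Proof. by rewrite !(ipC z) ipNl. Qed.

Lemma ipBr x y z : ip z (x - y) = ip z x - ip z y.
Proof. by rewrite !(ipC z) ipBl. Qed.

Lemma ipxx x : ip x x = `|x| ^+ 2.
Proof. by case: ipX. Qed.

Lemma sqr_normD x y : `|x + y| ^+ 2 = `|x| ^+ 2 + 2 * ip x y + `|y| ^+ 2.
Proof. rewrite -!ipxx ipDl !ipDr (ipC y x); lra. Qed.

Lemma parallelogram (x y : X) :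
  `|x + y| ^+ 2 + `|x - y| ^+ 2 = 2 * `|x| ^+ 2 + 2 * `|y| ^+ 2.
Proof. rewrite !sqr_normD ipNr normrN; lra. Qed.

End InnerProduct.

Lemma midpointE (R : numFieldType) (X : lmodType R) (x y : X) :
  (2^-1 : R) *: x + (1 - 2^-1) *: y = 2^-1 *: (x + y).
Proof. by rewrite scalerDr {2}(splitr 1) mul1r addrK. Qed.

Lemma ge0_of_small_quadratic (R : realFieldType) (a b : R) :
  (forall s, 0 < s <= 1 -> 0 <= s * a + s ^+ 2 * b) -> 0 <= a.
Proof.
move=> small; rewrite leNgt; apply/negP => a_lt0.
have d_gt0 : 0 < `|b| - a by have := normr_ge0 b; lra.
pose s := - a / (`|b| - a).
have sE : s * (`|b| - a) = - a by rewrite mulfVK ?gt_eqF.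
have s_gt0 : 0 < s by rewrite divr_gt0 ?oppr_gt0.
have s_le1 : s <= 1 by rewrite ler_pdivrMr // mul1r; have := normr_ge0 b; lra.
have := small s; rewrite s_gt0 s_le1 => /(_ isT).
have : s ^+ 2 * b <= s ^+ 2 * `|b| by rewrite ler_wpM2l ?sqr_ge0 ?ler_norm.
have : s ^+ 2 * `|b| = s * (s * (`|b| - a)) + s ^+ 2 * a by ring.
have : 0 < s ^+ 2 * - a by rewrite mulr_gt0 ?exprn_gt0 ?oppr_gt0.
rewrite sE; lra.
Qed.

Lemma cvgn_sqr_dist_harmonic (R : realType) (X : completeNormedModType R)
    (a : nat -> X) (c : R) :
  (forall n k, (n <= k)%N -> `|a n - a k| ^+ 2 <= c * harmonic n) -> cvgn a.
Proof.
move=> dist_le; apply: cauchy_cvg; apply: cauchy_exP => e e_gt0.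
have : \forall n \near \oo, c * harmonic n < e ^+ 2.
  apply: (cvgr_lt 0); last exact: exprn_gt0.
  by rewrite -(mulr0 c); apply: cvgM; [exact: cvg_cst | exact: cvg_harmonic].
case=> N _ cN; exists (a N); exists N => // k /= Nk.
rewrite -ball_normE /ball_ /=.
have := le_lt_trans (dist_le N k Nk) (cN N (leqnn N)).
by rewrite ltr_pXn2r ?nnegrE ?(ltW e_gt0).
Qed.

Section Minimizer.
Variables (R : realType) (X : completeNormedModType R) (K : set X) (F : X -> R).
Hypotheses (K_closed : closed K) (K_ne : K !=set0)
  (K_mid : forall x y, K x -> K y -> K (2^-1 *: (x + y))).
Hypothesis F_lbound : exists M, forall v, K v -> M <= F v.
Hypothesis F_cont : forall (a : nat -> X) p, K p ->
  (forall n, K (a n)) -> a @ \oo --> p -> F \o a @ \oo --> F p.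
Hypothesis F_mid : forall x y, K x -> K y ->
  F (2^-1 *: (x + y)) <= (F x + F y) / 2 - `|x - y| ^+ 2 / 8.

Let m := inf (F @` K).

Let has_inf_F : has_inf (F @` K).
Proof.
split; first by case: K_ne => v Kv; exists (F v), v.
by case: F_lbound => M lbM; exists M => _ [v Kv <-]; exact: lbM.
Qed.

Let inf_le v : K v -> m <= F v.
Proof. by move=> Kv; apply: (ge_inf has_inf_F.2); exists v. Qed.

Let sqr_dist_le x y : K x -> K y -> `|x - y| ^+ 2 <= 4 * (F x + F y - 2 * m).
Proof. by move=> Kx Ky; have := inf_le (K_mid Kx Ky); have := F_mid Kx Ky; lra. Qed.

Lemma minimizer_exists : exists2 p, K p & forall v, K v -> F p <= F v.
Proof.
have near_inf n : exists v, K v /\ F v < m + harmonic n.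
  by have [_ [v Kv <-] Fv] := inf_adherent (harmonic_gt0 n) has_inf_F; exists v.
have [a a_min] := choice near_inf.
have Ka n : K (a n) := (a_min n).1.
have cvg_a : cvgn a.
  apply: (@cvgn_sqr_dist_harmonic _ _ _ 8) => n k nk.
  have : harmonic k <= harmonic n :> R by rewrite /= lef_pV2 ?posrE ?ler_nat.
  have := sqr_dist_le (Ka n) (Ka k); have := (a_min n).2; have := (a_min k).2.
  have := inf_le (Ka n); have := inf_le (Ka k); lra.
have Kp : K (limn a) by apply: closed_cvg K_closed (nearW _ Ka) _ cvg_a.
have Fa_m : F \o a @ \oo --> m.
  apply: (@squeeze_cvgr _ _ _ _ (cst m) (fun n => m + harmonic n)).
  - by near=> n; rewrite inf_le //= ltW //; exact: (a_min n).2.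
  - exact: cvg_cst.
  - by rewrite -[X in _ --> X]addr0; apply: cvgD; [exact: cvg_cst | exact: cvg_harmonic].
exists (limn a) => // v Kv.
by rewrite (cvg_unique (@Rhausdorff R) (F_cont Kp Ka cvg_a) Fa_m); exact: inf_le.
Unshelve. all: end_near.
Qed.

End Minimizer.

Lemma lipschitz_on_ge0 (R : realType) (X : completeNormedModType R) (K : set X)
    (g : X -> R) :
  h_lipschitz_on K g ->
  exists2 L, 0 <= L & forall x y, K x -> K y -> `|g x - g y| <= L * `|x - y|.
Proof.
case=> L gL; exists `|L| => // x y Kx Ky.
by apply: le_trans (gL _ _ Kx Ky) _; rewrite ler_wpM2r ?ler_norm.
Qed.

Section Prox.
Variables (R : realType) (X : completeNormedModType R) (ip : X -> X -> R).
Hypothesis ipX : is_inner_product ip.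
Variables (K : set X) (g : X -> R) (w : X).
Hypotheses (K_closed : closed K) (K_ne : K !=set0) (K_convex : h_convex_set K).
Hypotheses (g_convex : h_convex_fun_on K g) (g_lip : h_lipschitz_on K g).

Let F v := g v + `|v - w| ^+ 2 / 2.

Let half_01 : 0 <= (2^-1 : R) <= 1.
Proof. by apply/andP; split; lra. Qed.

Let K_mid x y : K x -> K y -> K (2^-1 *: (x + y)).
Proof. by move=> Kx Ky; rewrite -midpointE; exact: K_convex. Qed.

Let F_mid x y : K x -> K y ->
  F (2^-1 *: (x + y)) <= (F x + F y) / 2 - `|x - y| ^+ 2 / 8.
Proof.
move=> Kx Ky; rewrite /F.
have := g_convex Kx Ky half_01; rewrite midpointE.
have -> : 2^-1 *: (x + y) - w = 2^-1 *: ((x - w) + (y - w)).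
  rewrite addrACA -opprD scalerBr -mulr2n -[w *+ 2]scaler_nat scalerA.
  by rewrite mulVf ?scale1r ?pnatr_eq0.
have := parallelogram ipX (x - w) (y - w).
have -> : x - w - (y - w) = x - y by rewrite opprB addrA subrK.
rewrite normrZ exprMn ger0_norm ?invr_ge0 //.
lra.
Qed.

Let F_lbound : exists M, forall v, K v -> M <= F v.
Proof.
have [L L_ge0 gL] := lipschitz_on_ge0 g_lip.
case: K_ne => v0 Kv0; exists (g v0 - L * `|w - v0| - L ^+ 2 / 2) => v Kv.
have := gL _ _ Kv Kv0; rewrite ler_norml => /andP[g_lb _].
have := ler_wpM2l L_ge0 (ler_distD w v v0).
have := sqr_ge0 (`|v - w| - L); rewrite /F; nra.
Qed.

Let F_cont (a : nat -> X) p : K p -> (forall n, K (a n)) ->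
  a @ \oo --> p -> F \o a @ \oo --> F p.
Proof.
move=> Kp Ka a_p; have [L L_ge0 gL] := lipschitz_on_ge0 g_lip.
apply: cvgD.
- apply/cvgrPdist_le => e e_gt0.
  have e'_gt0 : 0 < e / (L + 1) by rewrite divr_gt0 //; lra.
  near=> n; apply: le_trans (gL _ _ Kp (Ka n)) _.
  have : `|p - a n| <= e / (L + 1) by near: n; exact: cvgr_dist_le a_p _ e'_gt0.
  rewrite ler_pdivlMr; last lra.
  by have := normr_ge0 (p - a n); nra.
- have a_w : `|a n - w| @[n --> \oo] --> `|p - w|.
    by apply: cvg_norm; apply: cvgB => //; exact: cvg_cst.
  by apply: cvgM; [exact: (cvgM a_w a_w) | exact: cvg_cst].
Unshelve. all: end_near.
Qed.

Lemma prox_exists : exists2 p, K p & forall v, K v -> ip (w - p) (v - p) <= g v - g p.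
Proof.
have [p Kp p_min] := minimizer_exists K_closed K_ne K_mid F_lbound F_cont F_mid.
exists p => // v Kv.
suff : 0 <= g v - g p + ip (p - w) (v - p) by rewrite -[w - p]opprB (ipNl ipX); lra.
apply: (@ge0_of_small_quadratic _ _ (`|v - p| ^+ 2 / 2)) => s /andP[s_gt0 s_le1].
have s01 : 0 <= s <= 1 by rewrite ltW.
have := p_min _ (K_convex Kv Kp s01); have := g_convex Kv Kp s01; rewrite /F.
have -> : s *: v + (1 - s) *: p - w = (p - w) + s *: (v - p).
  by rewrite scalerBr scalerBl scale1r addrCA addrAC.
rewrite [`|p - w + _| ^+ 2](sqr_normD ipX) (ipZr ipX) normrZ exprMn.
by rewrite (ger0_norm (ltW s_gt0)); lra.
Qed.

End Prox.

Section HomogeneousVI.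
Variables (R : realType) (X : completeNormedModType R) (ip : X -> X -> R).
Hypothesis ipX : is_inner_product ip.
Variables (K : set X) (g : X -> R).
Hypotheses (K_cone : h_is_cone K) (g_hom : h_pos_homogeneous_on K g).

Lemma vi_pos_homogeneous xi p : K p ->
    (forall v, K v -> ip xi (v - p) <= g v - g p) ->
  g p = ip xi p /\ forall v, K v -> ip xi v <= g v.
Proof.
move=> Kp vi.
have vi_scaled l : 0 < l -> (l - 1) * ip xi p <= (l - 1) * g p.
  move=> l_gt0; have := vi _ (K_cone Kp (ltW l_gt0)).
  by rewrite g_hom // (ipBr ipX) (ipZr ipX) !mulrBl !mul1r.
have gp : g p = ip xi p.
  have := vi_scaled 2 (ltr0Sn R 1).
  have half_gt0 : 0 < 2^-1 :> R by rewrite invr_gt0.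
  have := vi_scaled _ half_gt0; lra.
by split=> // v Kv; have := vi v Kv; rewrite (ipBr ipX) gp; lra.
Qed.

End HomogeneousVI.

Lemma CsetP (R : realType) (X Y : completeNormedModType R) (ip : X -> X -> R)
    (K : set X) (j : Y -> X -> R) (eta : Y) (xi : X) :
  Cset ip K j eta xi <-> forall v, K v -> ip xi v <= j eta v.
Proof.
rewrite /Cset /Jext /=; split=> C_xi v.
  by move=> Kv; have := C_xi v; rewrite asboolT // lee_fin.
by case: asboolP => Kv; [rewrite lee_fin; exact: C_xi | exact: leey].
Qed.

Lemma h_normal_coneP (R : realType) (X : completeNormedModType R)
    (ip : X -> X -> R) (D : set X) (x n : X) :
  h_normal_cone ip D x n <-> D x /\ forall y, D y -> ip n (y - x) <= 0.
Proof. by rewrite /h_normal_cone; case: asboolP => Dx; split=> // -[]. Qed.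

Lemma h_normal_cone_reflection (R : realType) (X : completeNormedModType R)
    (ip : X -> X -> R) (D : set X) (a z n : X) :
  is_inner_product ip ->
  h_normal_cone ip [set a - x | x in D] z n <-> h_normal_cone ip D (a - z) (- n).
Proof.
move=> ipX; have ipE y c : ip (- n) (y - (a - c)) = ip n (a - y - c).
  by rewrite (ipNl ipX) -(ipNr ipX) opprB addrAC.
rewrite !h_normal_coneP; split=> -[Dz n_normal].
- case: Dz => x Dx ?; subst z; split=> [|y Dy]; first by rewrite opprB addrC subrK.
  by rewrite ipE; apply: n_normal; exists y.
- split; first by exists (a - z); rewrite // opprB addrC subrK.
  by move=> _ [y Dy <-]; rewrite -ipE; exact: n_normal.
Qed.

Section NormalConeVI.
Variables (R : realType) (X Y : completeNormedModType R) (ip : X -> X -> R).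
Hypothesis ipX : is_inner_product ip.
Variables (K : set X) (j : Y -> X -> R) (eta : Y).
Hypotheses (K_closed : closed K) (K_ne : K !=set0) (K_convex : h_convex_set K)
  (K_cone : h_is_cone K).
Hypotheses (j_convex : h_convex_fun_on K (j eta))
  (j_hom : h_pos_homogeneous_on K (j eta)) (j_lip : h_lipschitz_on K (j eta)).

Lemma vi_iff_normal_cone w u :
  (K u /\ forall v, K v -> ip w (v - u) <= j eta v - j eta u) <->
  h_normal_cone ip (Cset ip K j eta) w u.
Proof.
rewrite h_normal_coneP; split.
- case=> Ku vi; have [ju w_C] := vi_pos_homogeneous ipX K_cone j_hom Ku vi.
  split=> [|xi /CsetP xi_C]; first exact/CsetP.
  by have := xi_C u Ku; rewrite (ipBr ipX) !(ipC ipX u) ju; lra.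
- case=> /CsetP w_C u_normal.
  have [p Kp vi] := prox_exists ipX (w + u) K_closed K_ne K_convex j_convex j_lip.
  have [jp C_p] := vi_pos_homogeneous ipX K_cone j_hom Kp vi.
  have u_p : ip u (u - p) <= 0.
    by have := u_normal _ ((CsetP _ _ _ _ _).2 C_p); rewrite addrAC (addrC w) addrK.
  have p_u : ip w p <= ip (w + u - p) p by rewrite -jp; exact: w_C.
  have dist_le0 : `|u - p| ^+ 2 <= 0.
    move: u_p p_u; rewrite -(ipxx ipX).
    by rewrite !(ipBl ipX, ipBr ipX, ipDl ipX, ipNl ipX) (ipC ipX p u); lra.
  have u_eq_p : u = p.
    by apply/eqP; rewrite -subr_eq0 -normr_le0; have := normr_ge0 (u - p); nra.
  by subst p; split=> // v Kv; have := vi v Kv; rewrite addrK.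
Qed.

End NormalConeVI.

Theorem lemma3p1 (R : realType) (X Y : completeNormedModType R)
  (ipX : X -> X -> R) (ipY : Y -> Y -> R)
  (hX : is_inner_product ipX) (hY : is_inner_product ipY)
  (K : set X) (hKne : K !=set0) (hKcl : closed K) (hKcv : h_convex_set K)
  (hKcone : h_is_cone K)
  (j : Y -> X -> R)
  (hjconv : forall eta, h_convex_fun_on K (j eta))
  (hjhom : forall eta, h_pos_homogeneous_on K (j eta))
  (hjlip : forall eta, h_lipschitz_on K (j eta))
  (I : set R) (hI : (exists T : R, 0 < T /\ I = `[0, T]%classic) \/ I = `[0, +oo[%classic)
  (f : R -> X) (eta : Y) (u z : X) (t : R) (ht : I t) :
  (K u /\ forall v, K v -> j eta v - j eta u >= ipX (f t - z) (v - u)) <->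
  h_normal_cone ipX (Cset_t ipX K j f eta t) z (- u).
Proof.
rewrite /Cset_t h_normal_cone_reflection // opprK.
exact: vi_iff_normal_cone.
Qed.
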